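(* Let $N=2^L$ ($L\ge1$), channel numbers $r_0,\dots,r_{L-1}\ge1$, an output index $y$, and pairwise distinct covering templates $\mathbf x^{(1)},\dots,\mathbf x^{(M)}\in\mathbb R^s$ be given. Suppose all parameters of the deep ConvNet with ReLU activation, max pooling and weight sharing (representation parameters $\theta_1,\dots,\theta_M\in\Theta$ and the shared linear weights) are drawn from a distribution with a continuous, nowhere-vanishing probability density function. Then with positive probability the resulting score function $h^D_y$ can be realized by a shallow ConvNet with ReLU activation and max pooling (not limited by weight sharing) having a single hidden channel ($Z=1$), i.e. there exist $f_{\tilde\theta_1},\dots,f_{\tilde\theta_M}\in\mathcal F$ and weights for this shallow ConvNet with $\mathcal A(h^S_y)=\mathcal A(h^D_y)$.
   Context: Inputs are $X=(\mathbf x_1,\dots,\mathbf x_N)\in(\mathbb R^s)^N$. Representation functions come from a family $\mathcal F=\{f_\theta:\mathbb R^s\to\mathbb R:\theta\in\Theta\}$, $\Theta$ an open subset of a Euclidean space, assumed throughout to satisfy: (continuity) $f_\theta(\mathbf x)$ continuous in $\theta$ and $\mathbf x$; (non-degeneracy) for any pairwise distinct $\mathbf x^{(1)},\dots,\mathbf x^{(M)}$ there exist $f_{\theta_1},\dots,f_{\theta_M}\in\mathcal F$ with $(f_{\theta_d}(\mathbf x^{(i)}))_{i,d}$ non-singular. ReLU activation with max pooling: $\sigma(z)=\max\{0,z\}$, $P=\max$. Shallow ConvNet ($Z$ hidden channels, unshared): $h^S_y(X)=\sum_{z=1}^Z a^y_z\,P_{i\in[N]}\big(\sigma(\sum_{d=1}^M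 a^{z,i}_d f_{\theta_d}(\mathbf x_i))\big)$, $\mathbf a^{z,i}\in\mathbb R^M$, $\mathbf a^y\in\mathbb R^Z$. Deep ConvNet with weight sharing: with $f_{\theta_d}\in\mathcal F$ and weights $\mathbf a^{0,\gamma}\in\mathbb R^M$ ($\gamma\in[r_0]$), $\mathbf a^{l,\gamma}\in\mathbb R^{r_{l-1}}$ ($l\in[L-1]$, $\gamma\in[r_l]$), $\mathbf a^{L,y}\in\mathbb R^{r_{L-1}}$: $u^0_{j,\gamma}=\sigma(\sum_d a^{0,\gamma}_d f_{\theta_d}(\mathbf x_j))$; for $l=0,\dots,L-1$, $v^l_{j,\gamma}=P(u^l_{2j-1,\gamma},u^l_{2j,\gamma})$ ($j\in[N/2^{l+1}]$), for $l\ge1$, $u^l_{j,\gamma}=\sigma(\sum_\alpha a^{l,\gamma}_\alpha v^{l-1}_{j,\alpha})$ ($j\in[N/2^l]$); $h^D_y(X)=\sum_\alpha a^{L,y}_\alpha v^{L-1}_{1,\alpha}$. Grid tensor: $\mathcal A(h)_{d_1,\dots,d_N}=h(\mathbf x^{(d_1)},\dots,\mathbf x^{(d_N)})$. Templates are covering if score functions are identified whenever their grid tensors coincide. *)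

From mathcomp Require Import all_boot all_order all_algebra.
From mathcomp Require Import all_classical all_reals all_analysis.
Import numFieldNormedType.Exports.
Import Order.TTheory GRing.Theory Num.Theory.

Set Implicit Arguments.
Unset Strict Implicit.
Unset Printing Implicit Defensive.

Local Open Scope ring_scope.
Local Open Scope classical_set_scope.

Section ConvNets.
Context {R : realType}.

Definition relu (z : R) : R := Num.max 0 z.

(** Indices are 0-based: input positions j = 0..N-1, pooling pairs      *)
(** (2j, 2j+1) (the paper's (2j-1, 2j) in 1-based indexing).           *)
(**   rep d x   = f_{theta_d}(x)                                       *)
(**   a0 g d    = a^{0,g}_d                                            *)
(**   a l g al  = a^{l,g}_al  (1 <= l <= L-1)                          *)
(**   aL al     = a^{L,y}_al                                           *)
Section Deep.
Variables (s M L : nat) (r : nat -> nat).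
Variables (rep : 'I_M -> 'rV[R]_s -> R) (a0 : nat -> 'I_M -> R)
  (a : nat -> nat -> nat -> R) (aL : nat -> R) (X : nat -> 'rV[R]_s).

Fixpoint deep_u (l : nat) (j g : nat) : R :=
  match l with
  | 0 => relu (\sum_(d < M) a0 g d * rep d (X j))
  | l'.+1 => relu (\sum_(al < r l')
                     a l'.+1 g al * Num.max (deep_u l' (2 * j) al)
                                            (deep_u l' (2 * j).+1 al))
  end.

Definition deep_v (l j g : nat) : R :=
  Num.max (deep_u l (2 * j) g) (deep_u l (2 * j).+1 g).

Definition deep_score : R := \sum_(al < r L.-1) aL al * deep_v L.-1 0 al.
End Deep.

Definition shallow1_score (s M N : nat) (rep : 'I_M -> 'rV[R]_s -> R)
  (b : 'I_N -> 'I_M -> R) (c : R) (X : 'I_N -> 'rV[R]_s) : R :=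
  c * \big[Num.max/0]_(i < N) relu (\sum_(d < M) b i d * rep d (X i)).

(** Parameter space of the deep network: all parameters are collected    *)
(** in a single vector indexed by the finite type [pidx], i.e.          *)
(**   theta_d (d < M), coordinate j < k  (theta_d in Theta subset R^k)  *)
(** + a^{0,g}_d         (g < r_0, d < M)                                *)
(** + a^{l+1,g}_al      (l < L-1, g < r_{l+1}, al < r_l)                *)
(** + a^{L,y'}_al       (y' < Y output indices, al < r_{L-1}).           *)
(** A parameter vector is a tuple of reals of length #|pidx|; the         *)
(** coordinate of index i is stored at position enum_rank i.             *)
Definition pidx (M k L Y : nat) (r : nat -> nat) : finType :=
  (('I_M * 'I_k) + ('I_(r 0) * 'I_M)
   + {l : 'I_L.-1 & ('I_(r l.+1) * 'I_(r l))%type}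
   + ('I_Y * 'I_(r L.-1)))%type.

Section Decode.
Variables (M k L Y : nat) (r : nat -> nat).
Let I := pidx M k L Y r.
Variable t : #|{: I}|.-tuple R.

Definition par (i : I) : R := tnth t (enum_rank i).

Definition dec_theta (d : 'I_M) : 'rV[R]_k :=
  \row_(j < k) par (inl (inl (inl (d, j)))).

Definition dec_a0 (g : nat) (d : 'I_M) : R :=
  match (insub g : option 'I_(r 0)) with
  | Some g' => par (inl (inl (inr (g', d))))
  | None => 0
  end.

Definition dec_a (l g al : nat) : R :=
  match l with
  | 0 => 0
  | l'.+1 =>
    match (insub l' : option 'I_L.-1) with
    | Some lo =>
      match (insub g : option 'I_(r lo.+1)), (insub al : option 'I_(r lo)) with
      | Some g', Some al' =>
          par (inl (inr (existT (fun l0 : 'I_L.-1 => ('I_(r l0.+1) * 'I_(r l0))%type)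
                                lo (g', al'))))
      | _, _ => 0
      end
    | None => 0
    end
  end.

Definition dec_aL (y : 'I_Y) (al : nat) : R :=
  match (insub al : option 'I_(r L.-1)) with
  | Some al' => par (inr (y, al'))
  | None => 0
  end.
End Decode.

Definition deep_net_score (s M k L Y : nat) (r : nat -> nat)
  (f : 'rV[R]_k -> 'rV[R]_s -> R) (y : 'I_Y)
  (t : #|{: pidx M k L Y r}|.-tuple R) (N : nat) (X : 'I_N -> 'rV[R]_s) : R :=
  deep_score L r (fun d x => f (dec_theta t d) x) (dec_a0 t) (dec_a t)
    (dec_aL t y)
    (fun j => match (insub j : option 'I_N) with Some i => X i | None => 0 end).

(** nonnegative measurable integrand this is the integral against the   *)
(** n-dimensional Lebesgue measure (Fubini-Tonelli).                    *)
Fixpoint iter_lebesgue_int (n : nat) : (n.-tuple R -> \bar R) -> \bar R :=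
  match n return (n.-tuple R -> \bar R) -> \bar R with
  | 0 => fun F => F [tuple]
  | n'.+1 => fun F =>
      (\int[@lebesgue_measure R]_x
         iter_lebesgue_int (fun t : n'.-tuple R => F [tuple of x :: t]))%E
  end.

Definition tuple_continuous_on (n : nat) (O : set (n.-tuple R))
  (p : n.-tuple R -> R) : Prop :=
  forall t, O t -> forall e : R, 0 < e ->
    exists2 del : R, 0 < del &
      forall t', O t' -> (forall i, `|tnth t i - tnth t' i| < del) ->
        `|p t - p t'| < e.

Definition cont_nowhere_vanishing_pdf (n : nat) (Omega : set (n.-tuple R))
  (p : n.-tuple R -> R) : Prop :=
  [/\ forall t, Omega t -> 0 < p t,
      forall t, ~ Omega t -> p t = 0,
      tuple_continuous_on Omega p
    & iter_lebesgue_int (fun t => (p t)%:E) = 1%E].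

Definition prob_density (n : nat) (p : n.-tuple R -> R) (A : set (n.-tuple R))
  : \bar R :=
  iter_lebesgue_int (fun t => (p t * \1_A t)%:E).

End ConvNets.

(** With positive probability every first-layer unit of the deep network is
    switched off on every template: then all ReLU/max-pooling layers output 0,
    so [h^D_y] vanishes on the grid and is realized by a shallow network with
    output weight 0.  Non-degeneracy at the distinct templates gives
    representation parameters with an invertible template matrix, and solving
    a linear system yields first-layer weights whose pre-activations are all
    [-1].  Pre-activations depend continuously on the parameters, so they stay
    negative on a small box around this parameter vector; the box lies in the
    support of the density, which is bounded below near its centre, hence the
    box has positive probability. *)

From mathcomp Require Import all_boot all_order all_algebra.
From mathcomp Require Import all_classical all_reals all_analysis.
From mathcomp Require Import lra zify.
Import numFieldNormedType.Exports.
Import Order.TTheory GRing.Theory Num.Theory.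

Set Implicit Arguments.
Unset Strict Implicit.
Unset Printing Implicit Defensive.

Local Open Scope ring_scope.
Local Open Scope classical_set_scope.

Lemma unitmx_solve (F : comUnitRingType) (n : nat) (A : 'M[F]_n) (b : 'I_n -> F) :
  A \in unitmx -> exists x : 'I_n -> F, forall i, \sum_j A i j * x j = b i.
Proof.
move=> A_unit; exists (fun j => (invmx A *m \col_i b i) j 0) => i.
have : (A *m (invmx A *m \col_i b i)) i 0 = b i.
  by rewrite mulmxA mulmxV // mul1mx mxE.
by rewrite mxE.
Qed.

Section TupleNeighbourhoods.
Context {R : realType}.

Definition box (n : nat) (t0 : n.-tuple R) (del : R) : set (n.-tuple R) :=
  [set t | forall i, `|tnth t0 i - tnth t i| < del].

Lemma box_measurable (n : nat) (t0 : n.-tuple R) (del : R) :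
  measurable (box t0 del).
Proof.
have -> : box t0 del = \bigcap_(i in [set: 'I_n])
    (setT `&` ((fun t : n.-tuple R => tnth t i) @^-1`
               `](tnth t0 i - del), (tnth t0 i + del)[%classic)).
  apply/seteqP; split => t /= H.
    by move=> i _; split => //=; rewrite in_itv /= -ltr_distlC.
  by move=> i; have [_ /=] := H i I; rewrite in_itv /= -ltr_distlC.
apply: fin_bigcap_measurable; first exact: finite_finset.
by move=> i _; apply: measurable_tnth => //; exact: measurable_itv.
Qed.

Lemma box_le (n : nat) (t0 : n.-tuple R) (del del' : R) :
  del <= del' -> box t0 del `<=` box t0 del'.
Proof. by move=> le_del t Ht i; apply: lt_le_trans (Ht i) le_del. Qed.

Definition near_tuple (n : nat) (t0 : n.-tuple R) (Q : set (n.-tuple R)) :=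
  exists2 del : R, 0 < del & box t0 del `<=` Q.

Lemma near_tuple_impl (n : nat) (t0 : n.-tuple R) (P Q : set (n.-tuple R)) :
  P `<=` Q -> near_tuple t0 P -> near_tuple t0 Q.
Proof. by move=> PQ [del del0 H]; exists del => // t /H /PQ. Qed.

Lemma near_tuple_and (n : nat) (t0 : n.-tuple R) (P Q : set (n.-tuple R)) :
  near_tuple t0 P -> near_tuple t0 Q -> near_tuple t0 (P `&` Q).
Proof.
move=> [d1 d10 H1] [d2 d20 H2]; exists (Num.min d1 d2); first by rewrite lt_min d10.
move=> t Ht; split.
  by apply: H1; apply: box_le Ht; rewrite ge_min lexx.
by apply: H2; apply: box_le Ht; rewrite ge_min lexx orbT.
Qed.

Lemma near_tuple_all (n : nat) (t0 : n.-tuple R) (J : finType)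
    (Q : J -> set (n.-tuple R)) :
  (forall j, near_tuple t0 (Q j)) -> near_tuple t0 (fun t => forall j, Q j t).
Proof.
move=> HQ.
suff : near_tuple t0 (fun t => forall j, j \in enum J -> Q j t).
  by apply: near_tuple_impl => t Ht j; apply: Ht; rewrite mem_enum.
elim: (enum J) => [|j s IH].
  by exists 1 => // t _ j; rewrite in_nil.
apply: near_tuple_impl (near_tuple_and (HQ j) IH) => t [Qj Qs] x.
by rewrite in_cons => /orP[/eqP->|]; [exact: Qj | exact: Qs].
Qed.

Lemma ball_realE (x y e : R) : ball x e y = (`|x - y| < e).
Proof. by rewrite -ball_normE. Qed.

Definition tuple_cont_at (n : nat) (U : pseudoMetricType R) (t0 : n.-tuple R)
    (F : n.-tuple R -> U) :=
  forall e : R, 0 < e -> near_tuple t0 (fun t => ball (F t0) e (F t)).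

Lemma tuple_cont_at_cst (n : nat) (U : pseudoMetricType R) (t0 : n.-tuple R)
    (u : U) :
  tuple_cont_at t0 (fun _ => u).
Proof. by move=> e e0; exists 1 => // t _; exact: ballxx. Qed.

Lemma tuple_cont_at_comp2 (n : nat) (U V W : pseudoMetricType R)
    (t0 : n.-tuple R) (G : U * V -> W) (F1 : n.-tuple R -> U)
    (F2 : n.-tuple R -> V) :
  {for (F1 t0, F2 t0), continuous G} ->
  tuple_cont_at t0 F1 -> tuple_cont_at t0 F2 ->
  tuple_cont_at t0 (fun t => G (F1 t, F2 t)).
Proof.
move=> Gc F1c F2c e e0.
have /nbhs_ballP[eta eta0 HG] := Gc _ (nbhsx_ballx (G (F1 t0, F2 t0)) _ e0).
apply: near_tuple_impl (near_tuple_and (F1c _ eta0) (F2c _ eta0)).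
by move=> t [b1 b2]; apply: (HG (F1 t, F2 t)).
Qed.

Lemma tuple_cont_at_sum (n : nat) (J : finType) (t0 : n.-tuple R)
    (F : J -> n.-tuple R -> R) :
  (forall j, tuple_cont_at t0 (F j)) ->
  tuple_cont_at t0 (fun t => \sum_j F j t).
Proof.
move=> Fc; elim: (index_enum J) => [|j s IH].
  under [X in tuple_cont_at _ X]funext => t do rewrite big_nil.
  exact: tuple_cont_at_cst.
under [X in tuple_cont_at _ X]funext => t do rewrite big_cons.
exact: (tuple_cont_at_comp2 (G := fun z : R * R => z.1 + z.2) (add_continuous _)).
Qed.

Lemma tuple_cont_at_lt0 (n : nat) (t0 : n.-tuple R) (F : n.-tuple R -> R) :
  tuple_cont_at t0 F -> F t0 < 0 -> near_tuple t0 (fun t => F t < 0).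
Proof.
move=> Fc Ft0; have : 0 < - F t0 by rewrite oppr_gt0.
move=> /Fc; apply: near_tuple_impl => t.
rewrite ball_realE ltr_norml => /andP[? _]; lra.
Qed.

Lemma tuple_cont_at_open (n : nat) (U : pseudoMetricType R) (t0 : n.-tuple R)
    (F : n.-tuple R -> U) (A : set U) :
  open A -> tuple_cont_at t0 F -> A (F t0) -> near_tuple t0 (fun t => A (F t)).
Proof.
rewrite openE => Aopen Fc /Aopen /nbhs_ballP[e e0 HA].
by apply: near_tuple_impl (Fc _ e0) => t /HA.
Qed.

End TupleNeighbourhoods.

Section TupleIntegral.
Context {R : realType}.
Local Open Scope ereal_scope.

(** Unlike [ge0_le_integral], no measurability is required: both sides are
    suprema of integrals of simple functions below the integrand. *)
Lemma ge0_le_integral_nonmeas (d : measure_display) (T : measurableType d)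
    (mu : {measure set T -> \bar R}) (f g : T -> \bar R) :
  (forall x, 0 <= f x) -> (forall x, f x <= g x) ->
  \int[mu]_x f x <= \int[mu]_x g x.
Proof.
move=> f0 fg; have g0 x : 0 <= g x by apply: le_trans (fg x).
rewrite !ge0_integralTE //; apply: ereal_sup_le => _ [h hf <-]; exists h => //.
by move=> x; apply: le_trans (hf x) (fg x).
Qed.

Lemma iter_lebesgue_int_ge0 (n : nat) (F : n.-tuple R -> \bar R) :
  (forall t, 0 <= F t) -> 0 <= iter_lebesgue_int F.
Proof.
elim: n F => [|n IH] F F0 /=; first exact: F0.
by apply: integral_ge0 => x _; apply: IH.
Qed.

Lemma lebesgue_measure_itv_centered (x del : R) : (0 < del)%R ->
  lebesgue_measure (`](x - del)%R, (x + del)%R[%classic : set R) = (del *+ 2)%:E.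
Proof.
move=> del0; rewrite lebesgue_measure_itv /= lte_fin ifT; last by lra.
by rewrite -EFinB mulr2n; congr (_%:E); lra.
Qed.

Lemma iter_lebesgue_int_box_ge (n : nat) (t0 : n.-tuple R) (del c : R)
    (F : n.-tuple R -> \bar R) :
  (0 < del)%R -> (0 <= c)%R -> (forall t, 0 <= F t) ->
  (forall t, box t0 del t -> c%:E <= F t) ->
  (c * (del *+ 2) ^+ n)%:E <= iter_lebesgue_int F.
Proof.
move=> del0 c0; elim: n t0 F => [|n IH] t0 F F0 HF /=.
  by rewrite expr0 mulr1; apply: HF => -[].
case: t0 HF => -[//|x0 s0] /= size_s0 HF.
set k := (c * (del *+ 2) ^+ n)%R.
have k0 : (0 <= k)%R by rewrite /k mulr_ge0 // exprn_ge0 // mulrn_wge0 // ltW.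
set S := (`](x0 - del)%R, (x0 + del)%R[%classic : set R).
have slice_ge x : (k * \1_S x)%:E <=
    iter_lebesgue_int (fun t : n.-tuple R => F [tuple of x :: t]).
  rewrite indicE; case: (boolP (x \in S)) => xS; last first.
    by rewrite mulr0; apply: iter_lebesgue_int_ge0.
  rewrite mulr1; apply: (IH (Tuple size_s0)) => // t Ht; apply: HF => i.
  case: (unliftP ord0 i) => [j ->|->] /=.
    by have := Ht j; rewrite !(tnth_nth x0).
  rewrite !(tnth_nth x0) /=; move: xS; rewrite /S inE /= in_itv /= => /andP[? ?].
  rewrite ltr_norml; apply/andP; split; lra.
have nonneg x : 0 <= (k * \1_S x)%:E by rewrite lee_fin mulr_ge0.
apply: le_trans (ge0_le_integral_nonmeas lebesgue_measure nonneg slice_ge).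
rewrite (_ : \int[lebesgue_measure]_x (k * \1_S x)%:E =
             k%:E * \int[lebesgue_measure]_x (\1_S x)%:E); last first.
  apply: (integralZl_indic (m := @lebesgue_measure R) measurableT (fun=> S) k).
    by move=> /lt_geF; rewrite k0.
  exact: measurable_itv.
rewrite integral_indic //; last exact: measurable_itv.
rewrite (@setIT _ S) [X in _ * X](_ : _ = (del *+ 2)%:E); last first.
  exact: lebesgue_measure_itv_centered.
by rewrite -EFinM lee_fin /k exprSr mulrA.
Qed.

Lemma prob_density_box_gt0 (n : nat) (Omega : set (n.-tuple R))
    (p : n.-tuple R -> R) (t0 : n.-tuple R) (del : R) :
  cont_nowhere_vanishing_pdf Omega p -> (0 < del)%R -> box t0 del `<=` Omega ->
  0 < prob_density p (box t0 del).
Proof.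
move=> [p_gt0 p_out p_cont _] del0 boxOmega.
have t0Omega : Omega t0 by apply: boxOmega => i; rewrite subrr normr0.
have pt0 := p_gt0 _ t0Omega; have e0 : (0 < p t0 / 2)%R by lra.
have [del' del'0 Hp] := p_cont t0 t0Omega _ e0.
pose del'' := Num.min del del'.
have del''0 : (0 < del'')%R by rewrite lt_min del0.
apply: (@lt_le_trans _ _ ((p t0 / 2) * (del'' *+ 2) ^+ n)%:E).
  by rewrite lte_fin mulr_gt0 // exprn_gt0 // mulrn_wgt0.
rewrite /prob_density; apply: (iter_lebesgue_int_box_ge (t0 := t0)); rewrite // ?ltW //.
  move=> t; rewrite lee_fin mulr_ge0 // ?indicE //.
  by have [/p_gt0/ltW|/p_out->] := pselect (Omega t).
move=> t Ht; have tbox : box t0 del t by apply: box_le Ht; rewrite ge_min lexx.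
rewrite indicE mem_set // mulr1 lee_fin.
have tbox' : box t0 del' t by apply: box_le Ht; rewrite ge_min lexx orbT.
have := Hp t (boxOmega _ tbox) tbox'.
rewrite ltr_norml => /andP[? ?]; lra.
Qed.

End TupleIntegral.

Section DeepNetworkVanishing.
Context {R : realType}.

Lemma relu_eq0 (z : R) : z <= 0 -> relu z = 0.
Proof. by move=> z_le0; apply/max_idPl. Qed.

Lemma deep_u_eq0 (s M N : nat) (r : nat -> nat) (rep : 'I_M -> 'rV[R]_s -> R)
    (a0 : nat -> 'I_M -> R) (a : nat -> nat -> nat -> R) (X : nat -> 'rV[R]_s) :
  (forall j g, (j < N)%N -> deep_u r rep a0 a X 0 j g = 0) ->
  forall l j g, (2 ^ l * j.+1 <= N)%N -> deep_u r rep a0 a X l j g = 0.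
Proof.
move=> u0; elim=> [|l IH] j g le_jN /=.
  by apply: u0; move: le_jN; rewrite expn0 mul1n.
rewrite relu_eq0 // big1 // => al _.
by rewrite !IH ?maxxx ?mulr0 //; move: le_jN; rewrite expnS; nia.
Qed.

Lemma deep_score_eq0 (s M L : nat) (r : nat -> nat) (rep : 'I_M -> 'rV[R]_s -> R)
    (a0 : nat -> 'I_M -> R) (a : nat -> nat -> nat -> R) (aL : nat -> R)
    (X : nat -> 'rV[R]_s) :
  (1 <= L)%N ->
  (forall j g, (j < 2 ^ L)%N -> deep_u r rep a0 a X 0 j g = 0) ->
  deep_score L r rep a0 a aL X = 0.
Proof.
move=> L_gt0 u0; rewrite /deep_score big1 // => al _.
have le_2L : (2 ^ L.-1 * 2 <= 2 ^ L)%N by rewrite -expnSr prednK.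
by rewrite /deep_v !(deep_u_eq0 u0) ?maxxx ?mulr0 //; move: le_2L; nia.
Qed.

Definition first_layer_preact (s M k L Y : nat) (r : nat -> nat)
    (f : 'rV[R]_k -> 'rV[R]_s -> R) (t : #|{: pidx M k L Y r}|.-tuple R)
    (g : 'I_(r 0)) (x : 'rV[R]_s) : R :=
  \sum_(d < M) par t (inl (inl (inr (g, d)))) * f (dec_theta t d) x.

Lemma deep_net_score_eq0 (s M k L Y : nat) (r : nat -> nat)
    (f : 'rV[R]_k -> 'rV[R]_s -> R) (y : 'I_Y) (t : #|{: pidx M k L Y r}|.-tuple R)
    (X : 'I_(2 ^ L) -> 'rV[R]_s) :
  (1 <= L)%N -> (forall g i, first_layer_preact f t g (X i) <= 0) ->
  deep_net_score f y t X = 0.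
Proof.
move=> L_gt0 preact_le0; apply: deep_score_eq0 => // j g lt_j /=.
rewrite (insubT (fun j => j < 2 ^ L)%N lt_j) /dec_a0.
case: insubP => [g' _ _|_]; first exact/relu_eq0/preact_le0.
by rewrite big1 ?relu_eq0 // => d _; rewrite mul0r.
Qed.

End DeepNetworkVanishing.

Section ParameterVectors.
Context {R : realType}.
Variables (M k L Y : nat) (r : nat -> nat).

Definition param_of (th : 'I_M -> 'rV[R]_k) (w : 'I_M -> R) :
    #|{: pidx M k L Y r}|.-tuple R :=
  [tuple match enum_val i with
         | inl (inl (inl (d, j))) => th d 0 j
         | inl (inl (inr (_, d))) => w d
         | _ => 0
         end | i < #|{: pidx M k L Y r}|].

Lemma dec_theta_param_of (th : 'I_M -> 'rV[R]_k) (w : 'I_M -> R) (d : 'I_M) :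
  dec_theta (param_of th w) d = th d.
Proof.
apply/matrixP => i j; rewrite (ord1 i) mxE.
by rewrite /par tnth_mktuple enum_rankK.
Qed.

Lemma first_layer_preact_param_of (s : nat) (f : 'rV[R]_k -> 'rV[R]_s -> R)
    (th : 'I_M -> 'rV[R]_k) (w : 'I_M -> R) (g : 'I_(r 0)) (x : 'rV[R]_s) :
  first_layer_preact f (param_of th w) g x = \sum_(d < M) w d * f (th d) x.
Proof.
apply: eq_bigr => d _; rewrite dec_theta_param_of.
by rewrite /par tnth_mktuple enum_rankK.
Qed.

Lemma tuple_cont_at_par (t0 : #|{: pidx M k L Y r}|.-tuple R)
    (i : pidx M k L Y r) :
  tuple_cont_at t0 (fun t => par t i).
Proof. by move=> e e0; exists e => // t Ht; rewrite ball_realE; exact: Ht. Qed.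

Lemma tuple_cont_at_dec_theta (t0 : #|{: pidx M k L Y r}|.-tuple R) (d : 'I_M) :
  tuple_cont_at t0 (fun t => dec_theta t d).
Proof.
move=> e e0; exists e => // t Ht; split => // i j.
by rewrite (ord1 i) !mxE ball_realE; exact: Ht.
Qed.

Lemma first_layer_preact_cont (s : nat) (Theta : set 'rV[R]_k)
    (f : 'rV[R]_k -> 'rV[R]_s -> R) (t0 : #|{: pidx M k L Y r}|.-tuple R)
    (g : 'I_(r 0)) (x : 'rV[R]_s) :
  (forall th x, Theta th ->
     {for (th, x), continuous (fun q : 'rV[R]_k * 'rV[R]_s => f q.1 q.2)}) ->
  (forall d, Theta (dec_theta t0 d)) ->
  tuple_cont_at t0 (fun t => first_layer_preact f t g x).
Proof.
move=> f_cont t0Theta; apply: tuple_cont_at_sum => d.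
apply: (tuple_cont_at_comp2 (G := fun z : R * R => z.1 * z.2)).
- exact: mul_continuous.
- exact: tuple_cont_at_par.
apply: (tuple_cont_at_comp2 (G := fun q : 'rV[R]_k * 'rV[R]_s => f q.1 q.2)).
- exact: (f_cont _ x (t0Theta d)).
- exact: (tuple_cont_at_dec_theta t0 d).
- exact: tuple_cont_at_cst.
Qed.

End ParameterVectors.

Theorem claim16 (R : realType) (s k : nat) (Theta : set 'rV[R]_k)
  (f : 'rV[R]_k -> 'rV[R]_s -> R)
  (HTheta : open Theta)
  (Hcont : forall th x, Theta th ->
     {for (th, x), continuous (fun q : 'rV[R]_k * 'rV[R]_s => f q.1 q.2)})
  (Hnondeg : forall (m : nat) (xs : 'I_m -> 'rV[R]_s), injective xs ->
     exists th : 'I_m -> 'rV[R]_k, (forall d, Theta (th d)) /\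
       \det (\matrix_(i < m, d < m) f (th d) (xs i)) != 0)
  (L : nat) (HL : (1 <= L)%N) (r : nat -> nat)
  (Hr : forall l, (l < L)%N -> (0 < r l)%N)
  (Y : nat) (y : 'I_Y)
  (M : nat) (xt : 'I_M -> 'rV[R]_s) (Hxt : injective xt)
  (p : #|{: pidx M k L Y r}|.-tuple R -> R)
  (Hp : cont_nowhere_vanishing_pdf
          [set t | forall d : 'I_M, Theta (dec_theta t d)] p) :
  exists A : set (#|{: pidx M k L Y r}|.-tuple R),
    [/\ measurable A,
        (forall t, A t ->
           (forall d : 'I_M, Theta (dec_theta t d)) /\
           exists (th : 'I_M -> 'rV[R]_k) (b : 'I_(2 ^ L) -> 'I_M -> R) (c : R),
             (forall d, Theta (th d)) /\
             forall ds : 'I_(2 ^ L) -> 'I_M,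
               shallow1_score (fun d x => f (th d) x) b c (fun i => xt (ds i))
               = deep_net_score f y t (fun i => xt (ds i)))
      & (0 < prob_density p A)%E].
Proof.
have [th [thTheta det_th]] := Hnondeg M xt Hxt.
have A_unit : \matrix_(i, d) f (th d) (xt i) \in unitmx.
  by rewrite unitmxE unitfE; exact: det_th.
have [w Hw] := unitmx_solve (fun=> -1) A_unit.
pose t0 := param_of L Y r th w.
have t0Theta d : Theta (dec_theta t0 d) by rewrite dec_theta_param_of; exact: thTheta.
have preact_t0 g d' : first_layer_preact f t0 g (xt d') = -1.
  by rewrite first_layer_preact_param_of -(Hw d'); apply: eq_bigr => d _;
     rewrite mxE mulrC.
have [del del0 Hdel] : near_tuple t0 (fun t =>
    (forall d, Theta (dec_theta t d)) /\
    (forall g d', first_layer_preact f t g (xt d') < 0)).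
  apply: near_tuple_and.
    apply: near_tuple_all => d.
    exact: tuple_cont_at_open HTheta (tuple_cont_at_dec_theta t0 d) (t0Theta d).
  apply: near_tuple_all => g; apply: near_tuple_all => d'.
  apply: tuple_cont_at_lt0; last by rewrite preact_t0 ltrN10.
  exact: first_layer_preact_cont Hcont t0Theta.
exists (box t0 del); split.
- exact: box_measurable.
- move=> t /Hdel[tTheta preact_neg]; split => //.
  exists (dec_theta t), (fun _ _ => 0), 0; split => // ds.
  rewrite /shallow1_score mul0r deep_net_score_eq0 // => g i.
  exact/ltW/preact_neg.
- by apply: (prob_density_box_gt0 Hp del0) => t /Hdel[].
Qed.
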